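(* Let $R$ be an integral domain with field of fractions $K$, and let $U\in R^{m\times n}$ have rank $n$ over $K$ (so $n\le m$). Then $\mathrm{coker}(U)\cong R^{m-n}$ if and only if $\mathrm{coker}(UU^t)\cong R^{m-n}$.
   Context: For a matrix $B\in R^{m\times k}$, $\mathrm{coker}(B)=R^m/\mathrm{im}(B:R^k\to R^m)$; $U^t$ is the transpose. *)

From HB Require Import structures.
From mathcomp Require Import all_boot all_order all_algebra.
From mathcomp Require Import fraction.
Set Implicit Arguments. Unset Strict Implicit. Unset Printing Implicit Defensive.
Import Order.TTheory GRing.Theory Num.Theory.
Local Open Scope ring_scope.

Definition in_image (R : pzRingType) (m p : nat) (B : 'M[R]_(m, p))
  (x : 'cV[R]_m) : Prop := exists z : 'cV[R]_p, x = B *m z.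

(* coker(B) = R^m / im(B) is isomorphic (as an R-module) to R^k.
   Unfolded via the first isomorphism theorem: there is an R-linear map
   F : R^m -> R^k (every R-linear map R^m -> R^k is a k x m matrix)
   that is surjective and whose kernel is exactly im(B); F then induces
   the isomorphism R^m/im(B) ~= R^k, and conversely any isomorphism
   composed with the projection R^m -> coker(B) is such an F. *)
Definition coker_iso_free (R : comPzRingType) (m p k : nat)
  (B : 'M[R]_(m, p)) : Prop :=
  exists F : 'M[R]_(k, m),
    (forall y : 'cV[R]_k, exists x : 'cV[R]_m, F *m x = y) /\
    (forall x : 'cV[R]_m, F *m x = 0 <-> in_image B x).

(* Over the fraction field, full column rank gives a left inverse of U; clearing
   denominators yields W with W U = d for some nonzero d in R.  In both
   directions we show im U = im (U U^T), which suffices since a free cokernel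
   is witnessed by a map F : R^m -> R^(m-n) depending only on the image.
   If coker U is free, F splits and im U is a direct summand, so U H U = U for
   some H; multiplying by W and cancelling d gives H U = 1, whence
   U = U (H U)^T = U U^T H^T.  If coker (U U^T) is free, it is torsion-free, so
   im (U U^T) is saturated; it contains d im U because d U = U (W U)^T = U U^T W^T. *)
From HB Require Import structures.
From mathcomp Require Import all_boot all_order all_algebra.
From mathcomp Require Import fraction generic_quotient.
Import Order.TTheory GRing.Theory Num.Theory.
Local Open Scope ring_scope.

Lemma fraction_denominator {R : idomainType} (x : {fraction R}) :
  exists a b : R, b != 0 /\ x * tofrac b = tofrac a.
Proof.
elim/quotW: x => r; exists (frac r).1, (frac r).2; split; first exact: denom_ratioP.
unlock tofrac; rewrite /GRing.mul /= -FracField.pi_mul; apply/eqmodP.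
rewrite /= FracField.equivfE /FracField.mulf !numden_Ratio ?oner_neq0 ?mulf_neq0 ?denom_ratioP //.
- by rewrite !mulr1 mulrC.
all: exact: oner_neq0.
Qed.

Lemma fraction_common_denominator {R : idomainType} {I : finType}
    (x : I -> {fraction R}) :
  exists (d : R) (a : I -> R), d != 0 /\ forall i, x i * tofrac d = tofrac (a i).
Proof.
have /fin_all_exists2[f den0 numden] : forall i, exists2 ab : R * R,
    ab.2 != 0 & x i * tofrac ab.2 = tofrac ab.1.
  by move=> i; have [a [b [b0 e]]] := fraction_denominator (x i); exists (a, b).
exists (\prod_i (f i).2), (fun i => (f i).1 * \prod_(j | j != i) (f j).2).
split=> [|i]; first exact/prodf_neq0.
by rewrite (bigD1 i) //= !rmorphM /= -numden mulrA.
Qed.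

Lemma full_col_rank_quasi_inverse {R : idomainType} {m n : nat}
    {U : 'M[R]_(m, n)} :
  \rank (map_mx (@tofrac R) U) = n ->
  exists (d : R) (W : 'M[R]_(n, m)), d != 0 /\ W *m U = d%:M.
Proof.
move=> rkU.
have /row_fullP[V VU] : row_full (map_mx (@tofrac R) U) by rewrite /row_full rkU.
have [d [a [d0 Vd]]] := fraction_common_denominator (fun ij => V ij.1 ij.2).
exists d, (\matrix_(i, j) a (i, j)); split => //.
have mapW : map_mx (@tofrac R) (\matrix_(i, j) a (i, j)) = tofrac d *: V.
  by apply/matrixP => i j; rewrite !mxE -(Vd (i, j)) mulrC.
have : map_mx (@tofrac R) (\matrix_(i, j) a (i, j) *m U) =
       map_mx (@tofrac R) d%:M.
  by rewrite map_mxM mapW -scalemxAl VU scalemx1 map_scalar_mx.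
move/matrixP => eq_map; apply/matrixP => i j.
by have /eqP := eq_map i j; rewrite !mxE tofrac_eq => /eqP.
Qed.

Lemma mx_factor_cols {R : pzRingType} {p q r : nat}
    (A : 'M[R]_(p, q)) (B : 'M[R]_(p, r)) :
  (forall j, in_image B (col j A)) -> exists C : 'M[R]_(r, q), A = B *m C.
Proof.
move=> /fin_all_exists[z Az]; exists (\matrix_(i, j) z j i 0).
apply/matrixP => i j; have /matrixP/(_ i 0) := Az j; rewrite !mxE => ->.
by apply: eq_bigr => k _; rewrite !mxE.
Qed.

Section FreeCokernel.

Context {R : comPzRingType} {m k : nat}.

Lemma coker_iso_free_eq_image {p1 p2 : nat}
    {B1 : 'M[R]_(m, p1)} {B2 : 'M[R]_(m, p2)} :
  (forall x, in_image B1 x <-> in_image B2 x) ->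
  coker_iso_free k B1 <-> coker_iso_free k B2.
Proof.
by move=> eqB; split=> -[F [Fsur Fker]]; exists F; split=> // x;
  split=> [/Fker/eqB | /eqB/Fker].
Qed.

(* A free cokernel makes im B a direct summand of R^m. *)
Lemma coker_iso_free_regular {p : nat} {B : 'M[R]_(m, p)} :
  coker_iso_free k B -> exists H : 'M[R]_(p, m), B *m H *m B = B.
Proof.
move=> [F [Fsur Fker]].
have [G FG] : exists G : 'M[R]_(m, k), 1%:M = F *m G.
  by apply: mx_factor_cols => j; have [y Fy] := Fsur (col j 1%:M); exists y.
have [H GH] : exists H : 'M[R]_(p, m), 1%:M - G *m F = B *m H.
  apply: mx_factor_cols => j; apply/Fker.
  by rewrite colE !mulmxA mulmxBr mulmx1 mulmxA -FG mul1mx subrr mul0mx.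
have FB : F *m B = 0.
  apply/matrixP => i j; have FBj : col j (F *m B) = col j 0.
    rewrite col0 colE -mulmxA -colE; apply/Fker.
    by exists (delta_mx j 0); rewrite colE.
  exact: col_eq FBj i.
by exists H; rewrite -GH mulmxBl mul1mx -mulmxA FB mulmx0 subr0.
Qed.

End FreeCokernel.

Lemma coker_iso_free_saturated {R : idomainType} {m p k : nat}
    {B : 'M[R]_(m, p)} {a : R} {x : 'cV[R]_m} :
  coker_iso_free k B -> a != 0 -> in_image B (a *: x) -> in_image B x.
Proof.
move=> [F [_ Fker]] a0 /Fker; rewrite -scalemxAr => /eqP.
by rewrite scalemx_eq0 (negbTE a0) /= => /eqP/Fker.
Qed.

Theorem proposition8p3 (R : idomainType) (m n : nat) (U : 'M[R]_(m, n)) :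
  \rank (map_mx (@tofrac R) U) = n ->
  (coker_iso_free (m - n) U <-> coker_iso_free (m - n) (U *m U^T)).
Proof.
move=> rkU; have [d [W [d0 WU]]] := full_col_rank_quasi_inverse rkU.
have imUUt_sub x : in_image (U *m U^T) x -> in_image U x.
  by case=> z ->; exists (U^T *m z); rewrite mulmxA.
have d_imU x : in_image U x -> in_image (U *m U^T) (d *: x).
  case=> z ->; exists (W^T *m z).
  by rewrite -mulmxA (mulmxA U^T) -trmx_mul WU tr_scalar_mx mul_scalar_mx -scalemxAr.
split=> free.
- suff imU_eq x : in_image U x <-> in_image (U *m U^T) x.
    exact/(coker_iso_free_eq_image imU_eq).
  split; last exact: imUUt_sub.
  have [H UHU] := coker_iso_free_regular free.
  have HU : H *m U = 1%:M.
    have : d *: (H *m U - 1%:M) == 0.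
      by rewrite scalerBr -!mul_scalar_mx -WU mulmx1 -!mulmxA (mulmxA U) UHU subrr.
    by rewrite scalemx_eq0 (negbTE d0) subr_eq0 => /eqP.
  case=> z ->; exists (H^T *m z).
  by rewrite mulmxA -(mulmxA U) -trmx_mul HU trmx1 mulmx1.
- suff imU_eq x : in_image U x <-> in_image (U *m U^T) x.
    exact/(coker_iso_free_eq_image imU_eq).
  split=> [Ux|]; last exact: imUUt_sub.
  by apply: (coker_iso_free_saturated free d0); apply: d_imU.
Qed.
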